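(* For every integer $n\ge 1$, $$ \nu_3(T(n))=\begin{cases} 0, & n\equiv 1,2,3,4,5,6,8,10,11\pmod{13};\\ 1, & n\equiv 7\pmod{13};\\ \nu_3(n)+2, & n\equiv 0\pmod{13};\\ \nu_3(n+1)+2, & n\equiv 12\pmod{13};\\ 4, & n\equiv 9\pmod{39};\\ \nu_3(n+17)+4, & n\equiv 22\pmod{39};\\ \nu_3(n+4)+4, & n\equiv 35\pmod{39}. \end{cases} $$
   Context: $T:\mathbb Z\to\mathbb Z$ is the Tribonacci sequence defined by $T(0)=0$, $T(1)=T(2)=1$ and $T(n+3)=T(n+2)+T(n+1)+T(n)$ for all $n\in\mathbb Z$. For a prime $p$, $\nu_p$ denotes the $p$-adic valuation (exponent of $p$), with $\nu_p(0)=+\infty$. *)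

From mathcomp Require Import all_boot.
Set Implicit Arguments. Unset Strict Implicit. Unset Printing Implicit Defensive.

(* Tribonacci: T 0 = 0, T 1 = T 2 = 1, T (n+3) = T (n+2) + T (n+1) + T n.
   Only nonnegative indices are needed (the theorem is about n >= 1), and
   there all values are natural numbers. *)
Fixpoint trib (n : nat) : nat :=
  match n with
  | 0 => 0
  | 1 => 1
  | 2 => 1
  | ((m.+1 as k).+1 as j).+1 => trib j + trib k + trib m
  end.

(* 3-adic valuation of a positive natural number: logn 3 m
   (the exponent of 3 in m; T n > 0 for n >= 1, so no infinity case). *)

From Stdlib Require Import ZArith Lia Znumtheory.
From mathcomp Require Import all_boot zify.

(* We compute in the ring Z[X]/(X^3 - X^2 - X - 1), an element being the
   triple of its coefficients on 1, X, X^2.  Any solution s of the Tribonacci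
   recurrence satisfies s(N + k) = c0(X^N) s(k) + c1(X^N) s(k+1) + c2(X^N) s(k+2).
   We use the sequence trib_shift n = T(n - 17), i.e. Tribonacci continued to
   negative indices; it vanishes at n = 0, 13, 16, 17 (T(-17) = T(-4) = T(-1)
   = T(0) = 0).

   A triple A is "near b" when c0 A = 1 mod 3^(b+1) and c1 A, c2 A = 0 mod
   3^(b+2).  Near triples are closed under products and cubing raises b by 1;
   X^13 is near 0 and X^39 is near 1 (hence X^1053 = (X^39)^27 is near 4).
   - Periodic classes: if X^M is near b then s(M + k) = s(k) mod 3^(b+1), so
     every valuation v <= b is read off from a residue class representative.
   - Unbounded classes: if s(k) = 0 then s(M + k) is a linear form L in the
     X- and X^2-coefficients of X^M.  For near A, L(AB) = L(A) + L(B) and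
     L(A^3) = 3 L(A) modulo one 3-adic digit beyond the valuation, whence
     v3(L(A^t)) = v3(L(A)) + v3(t).
   The theorem follows from these two facts and finitely many computed
   certificates. *)

Set Implicit Arguments. Unset Strict Implicit.
Local Open Scope Z_scope.

Definition e3 (k : nat) : Z := Z.of_nat (3 ^ k).
Definition dvd3 (k : nat) (x : Z) : Prop := (e3 k | x).
Definition exact3 (k : nat) (x : Z) : Prop := exists w, x = e3 k * w /\ ~ (3 | w).

Lemma e3S k : e3 k.+1 = 3 * e3 k.
Proof. by rewrite /e3 expnS Nat2Z.inj_mul. Qed.

Lemma e3D k m : e3 (k + m) = e3 k * e3 m.
Proof. by rewrite /e3 expnD Nat2Z.inj_mul. Qed.

Lemma e3_gt0 k : 0 < e3 k.
Proof. rewrite /e3; have : (0 < 3 ^ k)%N by rewrite expn_gt0. lia. Qed.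

Lemma dvd3_le m k x : (m <= k)%N -> dvd3 k x -> dvd3 m x.
Proof.
move=> le_mk; apply: Z.divide_trans; exists (e3 (k - m)).
by rewrite -e3D subnK.
Qed.

Lemma dvd3_mul k m x y : dvd3 k x -> dvd3 m y -> dvd3 (k + m) (x * y).
Proof. by rewrite /dvd3 e3D => -[a ->] [c ->]; exists (a * c); ring. Qed.

Lemma dvd3_3 : dvd3 1 3.
Proof. by exists 1. Qed.

Lemma divide_add3 d x y z : (d | x) -> (d | y) -> (d | z) -> (d | x + y + z).
Proof. by move=> hx hy hz; apply: Z.divide_add_r => //; apply: Z.divide_add_r. Qed.

Lemma divide_add4 d x y z w :
  (d | x) -> (d | y) -> (d | z) -> (d | w) -> (d | x + y + z + w).
Proof. by move=> hx hy hz hw; apply: Z.divide_add_r => //; apply: divide_add3. Qed.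

Lemma dvd3_cube_sub1 k a : dvd3 k.+1 (a - 1) -> dvd3 k.+2 (a ^ 3 - 1).
Proof.
case=> z Ea; have -> : a = 1 + z * e3 k.+1 by lia.
exists (z + 3 * e3 k * z ^ 2 + 3 * e3 k ^ 2 * z ^ 3); rewrite !e3S; ring.
Qed.

Lemma exact3_dvd3 u x : exact3 u x -> dvd3 u x.
Proof. by case=> w [-> _]; exists w; ring. Qed.

Lemma exact3_congr u x y : exact3 u x -> dvd3 u.+1 (y - x) -> exact3 u y.
Proof.
case=> w [-> w3] [z]; rewrite e3S => Ey.
exists (w + 3 * z); split; first lia.
move=> /(Z.divide_sub_r _ _ (3 * z)) []; first by exists z; ring.
by move=> c Ec; apply: w3; exists c; lia.
Qed.

Lemma exact3_mul u x s : exact3 u x -> ~ (3 | s) -> exact3 u (s * x).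
Proof.
case=> w [-> w3] s3; exists (s * w); split; first ring.
by case/(prime_mult _ prime_3).
Qed.

Lemma exact3_triple u x y : exact3 u x -> dvd3 u.+2 (y - 3 * x) -> exact3 u.+1 y.
Proof.
case=> w [-> w3] [z]; rewrite !e3S => Ey.
apply: (@exact3_congr u.+1 (3 * (e3 u * w))).
  by exists w; split=> //; rewrite e3S; ring.
by exists z; rewrite !e3S; lia.
Qed.

Lemma logn_exact3 v m : exact3 v (Z.of_nat m) -> logn 3 m = v.
Proof.
case=> w [Em w3].
have w_gt0 : 0 < w.
  have := e3_gt0 v; have : w <> 0 by move=> w0; apply: w3; rewrite w0; exists 0.
  nia.
have -> : m = (3 ^ v * Z.to_nat w)%N by apply: Nat2Z.inj; rewrite Em /e3; lia.
rewrite lognM ?expn_gt0 //; last lia.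
rewrite pfactorK // logn_coprime ?addn0 // prime_coprime //.
by apply/negP=> /dvdnP [k Ek]; apply: w3; exists (Z.of_nat k); lia.
Qed.

Definition exact3b (k : nat) (x : Z) : bool :=
  (x mod e3 k =? 0) && negb ((x / e3 k) mod 3 =? 0).

Lemma exact3bP k x : exact3b k x -> exact3 k x.
Proof.
have e3_neq0 := e3_gt0 k.
case/andP=> /Z.eqb_eq /Z.div_exact Ex /negP w3.
exists (x / e3 k); split; first by apply: Ex; lia.
by move=> /(Z.mod_divide _ 3 ltac:(lia)) /Z.eqb_eq.
Qed.

(* The ring Z[X]/(X^3 - X^2 - X - 1): (a0, a1, a2) stands for a0 + a1 X + a2 X^2. *)
Definition tri := (Z * Z * Z)%type.

Definition c0 (A : tri) : Z := let '(a, _, _) := A in a.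
Definition c1 (A : tri) : Z := let '(_, b, _) := A in b.
Definition c2 (A : tri) : Z := let '(_, _, c) := A in c.

Definition tone : tri := (1, 0, 0).
Definition X : tri := (0, 1, 0).

(* Product, reducing X^3 = 1 + X + X^2 and X^4 = 1 + 2 X + 2 X^2. *)
Definition tmul (A B : tri) : tri :=
  let '(a0, a1, a2) := A in let '(b0, b1, b2) := B in
  let d3 := a1 * b2 + a2 * b1 in let d4 := a2 * b2 in
  (a0 * b0 + d3 + d4,
   a0 * b1 + a1 * b0 + d3 + 2 * d4,
   a0 * b2 + a1 * b1 + a2 * b0 + d3 + 2 * d4).

Ltac tri_unfold :=
  repeat match goal with A : tri |- _ => destruct A as [[? ?] ?] end;
  cbv -[Z.add Z.mul Z.sub Z.opp Z.pow].

Lemma tmulA A B C : tmul A (tmul B C) = tmul (tmul A B) C.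
Proof. by tri_unfold; f_equal; [f_equal|]; ring. Qed.

Lemma tmul1l A : tmul tone A = A.
Proof. by tri_unfold; f_equal; [f_equal|]; ring. Qed.

Lemma tmul1r A : tmul A tone = A.
Proof. by tri_unfold; f_equal; [f_equal|]; ring. Qed.

Fixpoint tpow (A : tri) (n : nat) : tri :=
  if n is m.+1 then tmul A (tpow A m) else tone.

Lemma tpowD A m n : tpow A (m + n) = tmul (tpow A m) (tpow A n).
Proof. by elim: m => [|m IH]; rewrite ?tmul1l //= IH tmulA. Qed.

Lemma tpowM A m n : tpow A (m * n) = tpow (tpow A m) n.
Proof. by elim: n => [|n IH]; rewrite ?muln0 // mulnS tpowD IH. Qed.

Definition tail (A : tri) : tri := (0, c1 A, c2 A).
Definition lform (p q : Z) (A : tri) : Z := p * c1 A + q * c2 A.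
Definition tscale (z : Z) (A : tri) : tri :=
  let '(a, b, c) := A in (z * a, z * b, z * c).

Lemma c0_tmul A B : c0 (tmul A B) = c0 A * c0 B + c0 (tmul (tail A) (tail B)).
Proof. by tri_unfold; ring. Qed.

Lemma lform_tmul p q A B :
  lform p q (tmul A B)
  = c0 A * lform p q B + c0 B * lform p q A + lform p q (tmul (tail A) (tail B)).
Proof. by tri_unfold; ring. Qed.

(* The same splitting for cubes, (a + F)^3 = a^3 + 3 a^2 F + 3 a F^2 + F^3. *)
Lemma c0_cube A :
  c0 (tpow A 3) = c0 A ^ 3 + 3 * c0 A * c0 (tmul (tail A) (tail A))
                  + c0 (tmul (tail A) (tail (tmul (tail A) (tail A)))).
Proof. by tri_unfold; ring. Qed.

Lemma lform_cube p q A :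
  lform p q (tpow A 3)
  = 3 * c0 A ^ 2 * lform p q A + 3 * c0 A * lform p q (tmul (tail A) (tail A))
    + c0 (tmul (tail A) (tail A)) * lform p q A
    + lform p q (tmul (tail A) (tail (tmul (tail A) (tail A)))).
Proof. by tri_unfold; ring. Qed.

Lemma tscale_tmul x y A B : tmul (tscale x A) (tscale y B) = tscale (x * y) (tmul A B).
Proof. by tri_unfold; f_equal; [f_equal|]; ring. Qed.

Lemma c0_tscale z A : c0 (tscale z A) = z * c0 A.
Proof. by tri_unfold. Qed.

Lemma lform_tscale p q z A : lform p q (tscale z A) = z * lform p q A.
Proof. by tri_unfold; ring. Qed.

Definition tail_dvd3 (k : nat) (A : tri) : Prop := forall p q, dvd3 k (lform p q A).

Lemma tail_dvd3_coord k A : dvd3 k (c1 A) -> dvd3 k (c2 A) -> tail_dvd3 k A.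
Proof. by move=> h1 h2 p q; apply: Z.divide_add_r; apply: Z.divide_mul_r. Qed.

Lemma tail_dvd3_tscale k A : tail_dvd3 k A -> exists F, tail A = tscale (e3 k) F.
Proof.
move=> hA.
have [x1 e1] : dvd3 k (c1 A).
  by have := hA 1 0; rewrite /lform Z.mul_1_l Z.mul_0_l Z.add_0_r.
have [x2 e2] : dvd3 k (c2 A).
  by have := hA 0 1; rewrite /lform Z.mul_1_l Z.mul_0_l Z.add_0_l.
by exists (0, x1, x2); rewrite /tail e1 e2 /tscale; f_equal; [f_equal|]; ring.
Qed.

Lemma tail_tmul_dvd3 k m A B : tail_dvd3 k A -> tail_dvd3 m B ->
  dvd3 (k + m) (c0 (tmul (tail A) (tail B))) /\
  tail_dvd3 (k + m) (tmul (tail A) (tail B)).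
Proof.
move=> /tail_dvd3_tscale [F ->] /tail_dvd3_tscale [G ->].
rewrite tscale_tmul -e3D c0_tscale; split; first by exists (c0 (tmul F G)); ring.
by move=> p q; rewrite lform_tscale; exists (lform p q (tmul F G)); ring.
Qed.

Definition near (b : nat) (A : tri) : Prop :=
  dvd3 b.+1 (c0 A - 1) /\ tail_dvd3 b.+2 A.

Lemma near_tone b : near b tone.
Proof. by split=> [|p q]; exists 0; rewrite /lform /=; ring. Qed.

Lemma near_tmul b A B : near b A -> near b B -> near b (tmul A B).
Proof.
move=> [hA0 hA] [hB0 hB]; have [hF0 hF] := tail_tmul_dvd3 hA hB; split.
- have -> : c0 (tmul A B) - 1 = (c0 A - 1) * (c0 B - 1) + (c0 A - 1) + (c0 B - 1)
                                + c0 (tmul (tail A) (tail B)) by rewrite c0_tmul; ring.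
  apply: divide_add4 => //; first exact: Z.divide_mul_l.
  by apply: dvd3_le hF0; lia.
- move=> p q; rewrite lform_tmul.
  apply: divide_add3; [exact: Z.divide_mul_r (hB p q) | exact: Z.divide_mul_r (hA p q) |].
  by apply: dvd3_le (hF p q); lia.
Qed.

Lemma near_tpow b A t : near b A -> near b (tpow A t).
Proof. by move=> hA; elim: t => [|t IH]; [exact: near_tone | exact: near_tmul]. Qed.

Lemma near_cube b A : near b A -> near b.+1 (tpow A 3).
Proof.
move=> [hA0 hA]; have [hG0 hG] := tail_tmul_dvd3 hA hA.
have [hH0 hH] := tail_tmul_dvd3 hA hG; split.
- rewrite c0_cube.
  have -> : forall x y, c0 A ^ 3 + x + y - 1 = (c0 A ^ 3 - 1) + x + y by move=> x y; ring.
  apply: divide_add3; first exact: dvd3_cube_sub1.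
    by apply: Z.divide_mul_r; apply: dvd3_le hG0; lia.
  by apply: dvd3_le hH0; lia.
- move=> p q; rewrite lform_cube.
  apply: divide_add4.
  + rewrite -Z.mul_assoc.
    by apply: dvd3_le (dvd3_mul dvd3_3 (Z.divide_mul_r _ _ _ (hA p q))); lia.
  + by apply: Z.divide_mul_r; apply: dvd3_le (hG p q); lia.
  + by apply: Z.divide_mul_l; apply: dvd3_le hG0; lia.
  + by apply: dvd3_le (hH p q); lia.
Qed.

Lemma near_tpow3 b A j : near b A -> near (b + j) (tpow A (3 ^ j)).
Proof.
move=> hA; elim: j => [|j IH]; first by rewrite addn0 expn0 /= tmul1r.
by rewrite addnS expnSr tpowM; apply: near_cube.
Qed.

(* On near triples a linear form is additive one digit beyond 3^u, as long as
   u <= 2b + 3 (the error comes from products of tails). *)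
Lemma lform_tmul_congr b u p q A B : near b A -> near b B ->
  dvd3 u (lform p q A) -> dvd3 u (lform p q B) -> (u <= 2 * b + 3)%N ->
  dvd3 u.+1 (lform p q (tmul A B) - lform p q A - lform p q B).
Proof.
move=> [hA0 hA] [hB0 hB] hLA hLB le_u; have [_ hF] := tail_tmul_dvd3 hA hB.
have -> : lform p q (tmul A B) - lform p q A - lform p q B
          = (c0 A - 1) * lform p q B + (c0 B - 1) * lform p q A
            + lform p q (tmul (tail A) (tail B)) by rewrite lform_tmul; ring.
apply: divide_add3.
- by apply: dvd3_le (dvd3_mul hA0 hLB); lia.
- by apply: dvd3_le (dvd3_mul hB0 hLA); lia.
- by apply: dvd3_le (hF p q); lia.
Qed.

Lemma lform_cube_congr b u p q A : near b A -> dvd3 u (lform p q A) ->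
  (u <= 2 * b + 3)%N -> dvd3 u.+2 (lform p q (tpow A 3) - 3 * lform p q A).
Proof.
move=> [hA0 hA] hLA le_u; have [hG0 hG] := tail_tmul_dvd3 hA hA.
have [_ hH] := tail_tmul_dvd3 hA hG.
set F2 := tmul (tail A) (tail A).
have -> : lform p q (tpow A 3) - 3 * lform p q A
          = 3 * ((c0 A - 1) * ((c0 A + 1) * lform p q A)) + 3 * (c0 A * lform p q F2)
            + c0 F2 * lform p q A + lform p q (tmul (tail A) (tail F2)).
  by rewrite lform_cube -/F2; ring.
apply: divide_add4.
- by apply: dvd3_le (dvd3_mul dvd3_3 (dvd3_mul hA0 (Z.divide_mul_r _ _ _ hLA))); lia.
- by apply: dvd3_le (dvd3_mul dvd3_3 (Z.divide_mul_r _ _ _ (hG p q))); lia.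
- by apply: dvd3_le (dvd3_mul hG0 hLA); lia.
- by apply: dvd3_le (hH p q); lia.
Qed.

Lemma lform_tpow_congr b u p q A t : near b A -> dvd3 u (lform p q A) ->
  (u <= 2 * b + 3)%N -> dvd3 u.+1 (lform p q (tpow A t) - Z.of_nat t * lform p q A).
Proof.
move=> hA hLA le_u; elim: t => [|t IH]; first by exists 0; rewrite /lform /=; ring.
have hLt : dvd3 u (lform p q (tpow A t)).
  have -> : lform p q (tpow A t)
            = (lform p q (tpow A t) - Z.of_nat t * lform p q A) + Z.of_nat t * lform p q A
    by ring.
  by apply: Z.divide_add_r; [apply: dvd3_le IH | apply: Z.divide_mul_r].
have -> : lform p q (tpow A t.+1) - Z.of_nat t.+1 * lform p q A
          = (lform p q (tmul A (tpow A t)) - lform p q A - lform p q (tpow A t))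
            + (lform p q (tpow A t) - Z.of_nat t * lform p q A).
  by rewrite Nat2Z.inj_succ /=; ring.
apply: Z.divide_add_r => //.
exact: lform_tmul_congr hA (near_tpow t hA) hLA hLt le_u.
Qed.

(* Write t = s 3^j with 3 not dividing s; the factor s is handled by additivity,
   each factor 3 by the cube congruence, which also raises the nearness. *)
Lemma exact3_lform_tpow b v p q A t : near b A -> exact3 v (lform p q A) ->
  (v <= 2 * b + 3)%N -> (0 < t)%N -> exact3 (v + logn 3 t) (lform p q (tpow A t)).
Proof.
move=> hA hv le_v t_gt0.
have [s s_coprime Et] := pfactor_coprime (isT : prime 3) t_gt0.
set j := logn 3 t in Et *; rewrite Et; clearbody j; clear Et.
suff [] : near (b + j) (tpow A (s * 3 ^ j)) /\
          exact3 (v + j) (lform p q (tpow A (s * 3 ^ j))) by [].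
elim: j => [|j [IHnear IHval]].
- rewrite expn0 muln1 !addn0; split; first exact: near_tpow.
  apply: exact3_congr (exact3_mul hv _) (lform_tpow_congr _ hA (exact3_dvd3 hv) le_v).
  by move: s_coprime; rewrite prime_coprime // => s3 [z Ez]; apply/negP: s3; lia.
- rewrite expnS mulnCA mulnC tpowM !addnS; split; first exact: near_cube.
  apply: exact3_triple IHval (lform_cube_congr IHnear (exact3_dvd3 IHval) _); lia.
Qed.

Definition rec3 (s : nat -> Z) : Prop := forall n, s n.+3 = s n + s n.+1 + s n.+2.

Definition comb (s : nat -> Z) (k : nat) (A : tri) : Z :=
  c0 A * s k + c1 A * s k.+1 + c2 A * s k.+2.

Lemma rec3_tpowX s : rec3 s -> forall N k, s (N + k)%N = comb s k (tpow X N).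
Proof.
move=> hs; elim=> [|N IH] k; first by rewrite add0n /comb; cbv -[Z.add Z.mul]; ring.
rewrite addSnnS IH /comb hs; change (tpow X N.+1) with (tmul X (tpow X N)).
by case: (tpow X N) => [[a0 a1] a2]; cbv -[Z.add Z.mul]; ring.
Qed.

Lemma rec3_periodic s b M k : rec3 s -> near b (tpow X M) ->
  dvd3 b.+1 (s (M + k)%N - s k).
Proof.
move=> hs [hM0 hM]; rewrite rec3_tpowX //.
have -> : comb s k (tpow X M) - s k
          = (c0 (tpow X M) - 1) * s k + lform (s k.+1) (s k.+2) (tpow X M).
  by rewrite /comb /lform; ring.
apply: Z.divide_add_r; first exact: Z.divide_mul_l.
by apply: dvd3_le (hM _ _); lia.
Qed.

Lemma rec3_from_zero s M k : rec3 s -> s k = 0 ->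
  s (M + k)%N = lform (s k.+1) (s k.+2) (tpow X M).
Proof. by move=> hs hk; rewrite rec3_tpowX // /comb /lform hk; ring. Qed.

(* trib_shift n = T(n - 17), computed with a sliding window of three values
   starting from T(-17) = 0, T(-16) = 56, T(-15) = -47. *)
Definition step (w : tri) : tri := let '(a, b, c) := w in (b, c, a + b + c).
Definition trib_shift (n : nat) : Z := c0 (iter n step (0, 56, -47)).

Lemma trib_shift_rec : rec3 trib_shift.
Proof. by move=> n; rewrite /trib_shift !iterS; case: (iter n step _) => [[a b] c]. Qed.

Lemma trib_shiftE k : trib_shift (k + 17) = Z.of_nat (trib k).
Proof.
pose P j := trib_shift (j + 17) = Z.of_nat (trib j).
suff /(_ k) [] : forall j, [/\ P j, P j.+1 & P j.+2] by [].
elim=> [|j [h0 h1 h2]]; first by split; vm_compute.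
by split=> //; rewrite /P addSn trib_shift_rec -!addSn h0 h1 h2 /=; lia.
Qed.

Lemma trib_val_periodic b M r v : near b (tpow X M) -> (v <= b)%N ->
  exact3b v (trib_shift (r + 17)) -> logn 3 (trib (M + r)) = v.
Proof.
move=> hM le_vb /exact3bP hv; apply: logn_exact3.
rewrite -trib_shiftE -addnA; apply: exact3_congr hv _.
by apply: dvd3_le (rec3_periodic _ trib_shift_rec hM); lia.
Qed.

Lemma trib_val_zero b N k v t n : near b (tpow X N) -> trib_shift k = 0 ->
  exact3b v (lform (trib_shift k.+1) (trib_shift k.+2) (tpow X N)) ->
  (v <= 2 * b + 3)%N -> (0 < t)%N -> (n + 17 = N * t + k)%N ->
  logn 3 (trib n) = (v + logn 3 t)%N.
Proof.
move=> hN hk /exact3bP hv le_v t_gt0 En; apply: logn_exact3.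
rewrite -trib_shiftE En (rec3_from_zero _ trib_shift_rec hk) tpowM.
exact: (exact3_lform_tpow hN hv le_v t_gt0).
Qed.

Definition nearb (b : nat) (A : tri) : bool :=
  [&& (c0 A - 1) mod e3 b.+1 =? 0, c1 A mod e3 b.+2 =? 0 & c2 A mod e3 b.+2 =? 0].

Lemma nearbP b A : nearb b A -> near b A.
Proof.
have mod_dvd3 k x : (x mod e3 k =? 0) -> dvd3 k x.
  by move=> h; apply/Z.mod_divide; [have := e3_gt0 k; lia | exact/Z.eqb_eq].
case/and3P=> /mod_dvd3 h0 /mod_dvd3 h1 /mod_dvd3 h2.
by split; last exact: tail_dvd3_coord.
Qed.

Lemma near_X13 : near 0 (tpow X 13).
Proof. by apply: nearbP; vm_compute. Qed.

Lemma near_X39 : near 1 (tpow X 39).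
Proof. by apply: nearbP; vm_compute. Qed.

Lemma near_X1053 : near 4 (tpow X 1053).
Proof. by rewrite (tpowM X 39 (3 ^ 3)); apply: near_tpow3 near_X39. Qed.

Lemma near_tpowX_mul b N t : near b (tpow X N) -> near b (tpow X (N * t)).
Proof. by rewrite tpowM; apply: near_tpow. Qed.

Definition residues (d c m : nat) : seq nat := [seq r <- iota 0 m | r %% d == c].

Lemma mod_in_residues d c m n : (d %| m)%N -> (0 < m)%N -> (n %% d = c)%N ->
  n %% m \in residues d c m.
Proof.
move=> dm m_gt0 <-.
by rewrite mem_filter mem_iota add0n ltn_mod m_gt0 modn_dvdm // eqxx.
Qed.

Lemma val_mod13 :
  all (fun r => exact3b 0 (trib_shift (r + 17))) [:: 1; 2; 3; 4; 5; 6; 8; 10; 11]%N.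
Proof. by vm_compute. Qed.

Lemma val_mod13_7 : all (fun r => exact3b 1 (trib_shift (r + 17))) (residues 13 7 39).
Proof. by vm_compute. Qed.

Lemma val_mod39_9 : all (fun r => exact3b 4 (trib_shift (r + 17))) (residues 39 9 1053).
Proof. by vm_compute. Qed.

Lemma trib_shift_zeros :
  [/\ trib_shift 0 = 0, trib_shift 13 = 0, trib_shift 16 = 0 & trib_shift 17 = 0].
Proof. by vm_compute. Qed.

Lemma val_zero_certificates :
  [&& exact3b 2 (lform (trib_shift 18) (trib_shift 19) (tpow X 13)),
      exact3b 2 (lform (trib_shift 17) (trib_shift 18) (tpow X 13)),
      exact3b 5 (lform (trib_shift 1) (trib_shift 2) (tpow X 39))
    & exact3b 5 (lform (trib_shift 14) (trib_shift 15) (tpow X 39))].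
Proof. by vm_compute. Qed.

Lemma logn3_13 t : logn 3 (13 * t) = logn 3 t :> nat.
Proof. by rewrite logn_Gauss. Qed.

Lemma logn3_39 t : (0 < t)%N -> logn 3 (39 * t) = (logn 3 t).+1.
Proof.
move=> t_gt0; have -> : (39 * t = 3 * (13 * t))%N by lia.
by rewrite lognM ?muln_gt0 // logn3_13 logn_prime.
Qed.

Local Close Scope Z_scope.

Theorem theorem3 (n : nat) : 1 <= n ->
  (n %% 13 \in [:: 1; 2; 3; 4; 5; 6; 8; 10; 11] -> logn 3 (trib n) = 0) /\
  (n %% 13 = 7 -> logn 3 (trib n) = 1) /\
  (n %% 13 = 0 -> logn 3 (trib n) = logn 3 n + 2) /\
  (n %% 13 = 12 -> logn 3 (trib n) = logn 3 (n + 1) + 2) /\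
  (n %% 39 = 9 -> logn 3 (trib n) = 4) /\
  (n %% 39 = 22 -> logn 3 (trib n) = logn 3 (n + 17) + 4) /\
  (n %% 39 = 35 -> logn 3 (trib n) = logn 3 (n + 4) + 4).
Proof.
move=> n_gt0.
have [z0 z13 z16 z17] := trib_shift_zeros.
case/and4P: val_zero_certificates => v13_0 v13_12 v39_22 v39_35.
split; [|split; [|split; [|split; [|split; [|split]]]]] => hn.
- rewrite (divn_eq n 13) mulnC.
  apply: (trib_val_periodic (near_tpowX_mul _ near_X13) (leqnn 0)).
  exact: (allP val_mod13).
- rewrite (divn_eq n 39) mulnC.
  apply: (trib_val_periodic (near_tpowX_mul _ near_X39) (leqnn 1)).
  by apply: (allP val_mod13_7); apply: mod_in_residues hn.
- have En : n = 13 * (n %/ 13) by rewrite {1}(divn_eq n 13) hn addn0 mulnC.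
  rewrite {2}En logn3_13 addnC.
  apply: (trib_val_zero near_X13 z17 v13_0 (leqnSn 2)); first lia.
  by rewrite {1}En.
- have En : n + 1 = 13 * (n %/ 13).+1 by rewrite {1}(divn_eq n 13) hn; lia.
  rewrite En logn3_13 addnC.
  apply: (trib_val_zero near_X13 z16 v13_12 (leqnSn 2) (ltn0Sn _)).
  by rewrite -En -addnA.
- rewrite (divn_eq n 1053) mulnC.
  apply: (trib_val_periodic (near_tpowX_mul _ near_X1053) (leqnn 4)).
  by apply: (allP val_mod39_9); apply: mod_in_residues hn.
- have En : n + 17 = 39 * (n %/ 39).+1 by rewrite {1}(divn_eq n 39) hn; lia.
  rewrite En (logn3_39 (ltn0Sn _)) addSnnS addnC.
  apply: (trib_val_zero near_X39 z0 v39_22 (leqnn 5) (ltn0Sn _)).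
  by rewrite En addn0.
- have En : n + 4 = 39 * (n %/ 39).+1 by rewrite {1}(divn_eq n 39) hn; lia.
  rewrite En (logn3_39 (ltn0Sn _)) addSnnS addnC.
  apply: (trib_val_zero near_X39 z13 v39_35 (leqnn 5) (ltn0Sn _)).
  by rewrite -En -addnA.
Qed.
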